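(* For every theory $\Sigma$ and every formula $A \Rightarrow B$: $\Sigma \vdash A \Rightarrow B$ if and only if $\Sigma \models A \Rightarrow B$.
   Context: $Y$ is a non-empty finite set of attributes and $\mathcal{T}_Y = \{y^i \mid y \in Y, i \in \mathbb{Z}\}$; $M + j = \{y^{i+j} \mid y^i \in M\}$. A formula is $A \Rightarrow B$ with $A,B$ finite subsets of $\mathcal{T}_Y$; $M \models A \Rightarrow B$ means that for every $i \in \mathbb{Z}$, $A+i \subseteq M$ implies $B+i \subseteq M$; $\Sigma \models A \Rightarrow B$ means $A \Rightarrow B$ is true in every $M \subseteq \mathcal{T}_Y$ in which all formulas of the theory $\Sigma$ are true. Deduction rules (for arbitrary finite $A,B,C,D \subseteq \mathcal{T}_Y$, $i \in \mathbb{Z}$): (Ax) infer $A \cup B \Rightarrow A$; (Cut) from $A \Rightarrow B$ and $B \cup C \Rightarrow D$ infer $A \cup C \Rightarrow D$; (Shf) from $A \Rightarrow B$ infer $A+i \Rightarrow B+i$. $\Sigma \vdash A \Rightarrow B$ means there is a finite sequence of formulas ending with $A \Rightarrow B$ in which each member is in $\Sigma$ or is the conclusion of one of these rules applied to earlier members. *)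

From mathcomp Require Import all_boot all_algebra.
From mathcomp Require Import finmap.
Set Implicit Arguments. Unset Strict Implicit. Unset Printing Implicit Defensive.
Local Open Scope fset_scope.

(* Terms T_Y = { y^i | y in Y, i in Z }, represented as pairs (y, i). *)
Definition term (Y : finType) := (Y * int)%type.

Definition shift (Y : finType) (A : {fset term Y}) (j : int) : {fset term Y} :=
  [fset ((x.1, (x.2 + j)%R) : term Y) | x in A].

Record formula (Y : finType) := Formula { lhs : {fset term Y}; rhs : {fset term Y} }.

(* Arbitrary (possibly infinite) subsets M of T_Y. *)
Definition tset (Y : finType) := term Y -> Prop.

Definition fsub (Y : finType) (A : {fset term Y}) (M : tset Y) : Prop :=
  forall t, t \in A -> M t.

Definition holds (Y : finType) (M : tset Y) (f : formula Y) : Prop :=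
  forall i : int, fsub (shift (lhs f) i) M -> fsub (shift (rhs f) i) M.

Definition entails (Y : finType) (Sigma : formula Y -> Prop) (f : formula Y) : Prop :=
  forall M : tset Y, (forall g, Sigma g -> holds M g) -> holds M f.

Inductive provable (Y : finType) (Sigma : formula Y -> Prop) : formula Y -> Prop :=
  | pr_hyp f : Sigma f -> provable Sigma f
  | pr_ax (A B : {fset term Y}) : provable Sigma (Formula (A `|` B) A)
  | pr_cut (A B C D : {fset term Y}) :
      provable Sigma (Formula A B) -> provable Sigma (Formula (B `|` C) D) ->
      provable Sigma (Formula (A `|` C) D)
  | pr_shf (A B : {fset term Y}) (i : int) :
      provable Sigma (Formula A B) -> provable Sigma (Formula (shift A i) (shift B i)).

From Pilot Require Import Defs.
From mathcomp Require Import all_boot all_algebra.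
From mathcomp Require Import finmap.
Set Implicit Arguments. Unset Strict Implicit. Unset Printing Implicit Defensive.
Import GRing.Theory.
Local Open Scope fset_scope.

(* Soundness is a routine check that each rule preserves truth in every model.
   For completeness, take as model the set of all terms t with
   Sigma |- A => {t}: it satisfies Sigma (by Shf and Cut) and contains A
   (by Ax), so entailment puts B in it, and the singleton conclusions
   A => {t}, t in B, combine into A => B. *)

Section Shift.
Variable Y : finType.
Implicit Types (A B : {fset term Y}) (M : tset Y).

Lemma in_shift A i (t : term Y) : (t \in shift A i) = ((t.1, t.2 - i)%R \in A).
Proof.
apply/imfsetP/idP => [[[y k] kA ->]|tA]; first by rewrite /= addrK.
by exists (t.1, t.2 - i)%R; rewrite //= subrK; case: t {tA}.
Qed.

Lemma shift0 A : shift A 0 = A.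
Proof. by apply/fsetP => t; rewrite in_shift subr0; case: t. Qed.

Lemma shiftU A B i : shift (A `|` B) i = shift A i `|` shift B i.
Proof. exact: imfsetU. Qed.

Lemma shiftD A i j : shift (shift A i) j = shift A (i + j)%R.
Proof. by apply/fsetP => t; rewrite !in_shift /= (addrC i j) opprD addrA. Qed.

(* [Defs.fsub] is qualified because finmap also exports an [fsub]. *)
Lemma fsub_fsetU A B M : Defs.fsub (A `|` B) M <-> Defs.fsub A M /\ Defs.fsub B M.
Proof.
split => [sub|[subA subB] t]; last by rewrite in_fsetU => /orP[/subA|/subB].
by split => t tX; apply: sub; rewrite in_fsetU tX ?orbT.
Qed.

End Shift.

Section Soundness.
Variables (Y : finType) (Sigma : formula Y -> Prop).

Lemma provable_sound f : provable Sigma f -> entails Sigma f.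
Proof.
elim=> {f} [f Sf | A B | A B C D _ AB _ BCD | A B i _ AB] M MSigma j /=.
- exact: MSigma.
- by rewrite shiftU => /fsub_fsetU[].
- rewrite !shiftU => /fsub_fsetU[MA MC].
  apply: (BCD M MSigma j); rewrite shiftU; apply/fsub_fsetU.
  by split=> //; apply: (AB M MSigma j).
- by rewrite !shiftD; apply: AB.
Qed.

End Soundness.

Section DerivedRules.
Variables (Y : finType) (Sigma : formula Y -> Prop).
Notation "A |- B" := (provable Sigma (Formula A B)) (at level 70).
Implicit Types A B C : {fset term Y}.

Lemma provable_refl A : A |- A.
Proof. by have := pr_ax Sigma A A; rewrite fsetUid. Qed.

Lemma provable_trans A B C : A |- B -> B |- C -> A |- C.
Proof. by move=> AB BC; have := pr_cut AB (C := fset0); rewrite !fsetU0; apply. Qed.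

Lemma provable_subset A B C : A |- B -> C `<=` B -> A |- C.
Proof.
move=> AB /fsetUidPr CB; apply: provable_trans AB _.
by rewrite -CB; apply: pr_ax.
Qed.

Lemma provable_fset0 A : A |- fset0.
Proof. exact: provable_subset (provable_refl A) (fsub0set A). Qed.

Lemma provable_fsetU A B C : A |- B -> A |- C -> A |- B `|` C.
Proof.
move=> AB AC.
have ACA : A |- C `|` A.
  by rewrite -{1}[A]fsetUid; apply: pr_cut AC (provable_refl _).
have CAB : C `|` A |- B `|` C by rewrite fsetUC; apply: pr_cut AB (provable_refl _).
exact: provable_trans ACA CAB.
Qed.

Lemma provable_points A B : (forall t, t \in B -> A |- [fset t]) -> A |- B.
Proof.
elim/fset1U_rect: B => [_|t B _ IH tB]; first exact: provable_fset0.
apply: provable_fsetU; first by apply: tB; rewrite fset1U1.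
by apply: IH => u uB; apply: tB; rewrite fset1Ur.
Qed.

Lemma provable_point A B t : A |- B -> t \in B -> A |- [fset t].
Proof. by move=> AB tB; apply: provable_subset AB _; rewrite fsub1set. Qed.

End DerivedRules.

Section Completeness.
Variables (Y : finType) (Sigma : formula Y -> Prop) (A : {fset term Y}).

Definition consequences : tset Y := fun t => provable Sigma (Formula A [fset t]).

Lemma consequences_fsub B :
  Defs.fsub B consequences <-> provable Sigma (Formula A B).
Proof.
split; first exact: provable_points.
by move=> AB t; apply: provable_point.
Qed.

Lemma consequences_model g : Sigma g -> holds consequences g.
Proof.
case: g => C D Sg i /=; rewrite !consequences_fsub => AC.
by apply: provable_trans AC (pr_shf i (pr_hyp Sg)).
Qed.

Lemma provable_complete B :
  entails Sigma (Formula A B) -> provable Sigma (Formula A B).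
Proof.
move=> AB; have := AB consequences consequences_model 0%R.
by rewrite /= !shift0 !consequences_fsub; apply; apply: provable_refl.
Qed.

End Completeness.

Theorem theorem7 (Y : finType) (hY : 0 < #|Y|) (Sigma : formula Y -> Prop)
    (A B : {fset term Y}) :
  provable Sigma (Formula A B) <-> entails Sigma (Formula A B).
Proof.
split; [exact: provable_sound | exact: provable_complete].
Qed.
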